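(* Let $p$ be an odd prime such that $\mathbb{F}_p$ contains a primitive cube root of unity $\omega$, and for integers $0\le r_1,r_2,r_3\le p-1$ let $\mathcal{C}_{(r_1,r_2,r_3)}$ be the cyclic code of length $3p$ over $\mathbb{F}_p$ generated by $(x-1)^{r_1}(x-\omega)^{r_2}(x-\omega^2)^{r_3}$, and let $d_p$ denote minimum symbol-pair distance. Then: (1) $d_p(\mathcal{C}_{(0,r_2,0)})=4$ whenever $2\le r_2\le p-1$; and, for exponents satisfying $p-1\ge r_1\ge r_2\ge r_3\ge 0$: (2) $d_p(\mathcal{C}_{(2,1,0)})=5$; (3) $d_p(\mathcal{C}_{(r_1,r_2,0)})=6$ whenever $r_1+r_2\ge 4$ and $r_2\ge 1$; (4) $d_p(\mathcal{C}_{(2,r_2,r_3)})=6$ whenever $2\le r_2+r_3\le 4$.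
   Context: For $\mathbf{x}=(x_0,\dots,x_{n-1})\in\mathbb{F}_p^n$, the symbol-pair distance is $D_p(\mathbf{x},\mathbf{y})=|\{i:(x_i,x_{i+1})\neq(y_i,y_{i+1})\}|$ (indices modulo $n$); the minimum symbol-pair distance of a code is the minimum of $D_p$ over distinct codewords. The cyclic code generated by $g(x)\mid x^n-1$ is the ideal $\langle g(x)\rangle$ in $\mathbb{F}_p[x]/\langle x^n-1\rangle$. *)

From mathcomp Require Import all_boot all_order all_algebra.
Set Implicit Arguments. Unset Strict Implicit. Unset Printing Implicit Defensive.
Import GRing.Theory.
Local Open Scope ring_scope.

Definition word (F : Type) (n : nat) := {ffun 'I_n -> F}.

(* Symbol-pair distance: number of i with (x_i, x_{i+1}) <> (y_i, y_{i+1}),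
   indices modulo n (ordS i has value (i+1) mod n). *)
Definition pair_dist (F : finType) (n : nat) (x y : word F n) : nat :=
  #|[pred i : 'I_n | (x i != y i) || (x (ordS i) != y (ordS i))]|.

Definition word_poly (F : fieldType) (n : nat) (c : word F n) : {poly F} :=
  \sum_(i < n) c i *: 'X^i.

(* The cyclic code generated by g: the ideal <g> of F[x]/<x^n - 1>,
   i.e. words whose polynomial is (g * f) mod (x^n - 1) for some f. *)
Definition cyclic_code (F : fieldType) (n : nat) (g : {poly F}) (c : word F n) : Prop :=
  exists f : {poly F}, word_poly c = (g * f) %% ('X^n - 1).

Definition min_pair_dist (F : finType) (n : nat) (C : word F n -> Prop) (d : nat) : Prop :=
  (exists x y : word F n, [/\ C x, C y, x <> y & pair_dist x y = d]) /\
  (forall x y : word F n, C x -> C y -> x <> y -> (d <= pair_dist x y)%N).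

Definition gen3 (F : fieldType) (w : F) (r1 r2 r3 : nat) : {poly F} :=
  ('X - 1) ^+ r1 * ('X - w%:P) ^+ r2 * ('X - (w ^+ 2)%:P) ^+ r3.

Definition Ccode (p : nat) (w : 'F_p) (r1 r2 r3 : nat) : word 'F_p (3 * p) -> Prop :=
  cyclic_code (gen3 w r1 r2 r3).

From mathcomp Require Import all_boot all_order all_algebra all_field.
From mathcomp Require Import ring zify.
Set Implicit Arguments.
Unset Strict Implicit.
Unset Printing Implicit Defensive.
Import GRing.Theory.
Local Open Scope ring_scope.

(* If the generator of a cyclic code of length n = 3p has the root a with
   multiplicity k, then so does every codeword c(x) modulo x^n - 1; since n = 0
   in F_p, the derivative of x^n - 1 vanishes, so c^(j)(a) = 0 for j < k, i.e.
   sum_i c_i a^i i(i-1)...(i-j+1) = 0.  The symbol-pair weight of c is the size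
   of its support plus the number of maximal cyclic runs of nonzero entries, so a
   nonzero codeword of small pair weight is supported on one position, two
   positions, a single short run, or a run of two plus one further position.  On
   each such support the vanishing conditions are a small generalized
   Vandermonde system in the positions and the powers of w, whose only solution
   is zero.  Raising exponents only shrinks the code, so five base codes carry
   all lower bounds; the codewords (x - w)^p = x^p - w, (x - 1)^2 (x - w),
   (x^p - 1)(x^p - w) and (x^3 - 1)^2 attain them. *)

Ltac linear_combination E :=
  transitivity E; [by repeat match goal with x := _ |- _ => subst x end; ring |].

Lemma mulIf_eq0 (R : idomainType) (b a : R) : b != 0 -> a * b = 0 -> a = 0.
Proof. by move=> b0 /eqP; rewrite mulf_eq0 (negbTE b0) orbF => /eqP. Qed.

Lemma mulfI_eq0 (R : idomainType) (a b : R) : a != 0 -> a * b = 0 -> b = 0.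
Proof. by move=> a0; rewrite mulrC; apply: mulIf_eq0. Qed.

(* The hypotheses of a lemma [*_sys_r1r2r3] are the derivative checks of the code
   C_(r1,r2,r3) on a word supported on the named shape: A, B, C, D are its entries,
   x (and y) the positions as field elements, al (and be) the matching powers of the
   root of the generator. *)
Section LinearSystems.
Variable F : fieldType.

Lemma adjacent_pair_sys_020 (A B al be x : F) : al != 0 ->
  A * al + B * be = 0 -> A * al * x + B * be * (x + 1) = 0 -> A = 0.
Proof.
move=> al0 e0 e1; apply: (mulIf_eq0 al0).
by linear_combination ((1 + x) * (A * al + B * be) - (A * al * x + B * be * (x + 1)));
  rewrite e0 e1; ring.
Qed.

Lemma pair_sys_210 (A B x y al be : F) : A != 0 ->
  A + B = 0 -> A * x + B * y = 0 -> A * al + B * be = 0 -> x = y /\ al = be.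
Proof.
move=> A0 e0 e1 e2; split; apply/eqP; rewrite -subr_eq0; apply/eqP; apply: (mulfI_eq0 A0).
  by linear_combination (A * x + B * y - y * (A + B)); rewrite e0 e1; ring.
by linear_combination (A * al + B * be - be * (A + B)); rewrite e0 e2; ring.
Qed.

Lemma adjacent_triple_sys_300 (A B C x y : F) : B != 0 ->
  A + B + C = 0 -> A * x + B * (x + 1) + C * y = 0 ->
  A * (x * (x - 1)) + B * ((x + 1) * x) + C * (y * (y - 1)) = 0 -> A = 0.
Proof.
move=> B0 e0 e1 e2.
set E0 := (X in X = 0) in e0; set E1 := (X in X = 0) in e1; set E2 := (X in X = 0) in e2.
have y_eq : y - x - 1 = 0.
  apply: (mulIf_eq0 B0).
  linear_combination ((y - x - 1) * (E1 - x * E0) - (E2 - 2%:R * x * E1 + x * (x + 1) * E0)).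
  by rewrite e0 e1 e2; ring.
by linear_combination ((1 + x) * E0 - E1 + (y - x - 1) * C); rewrite e0 e1 y_eq; ring.
Qed.

End LinearSystems.

Section PrimitiveCubeRoot.
Variables (F : fieldType) (w : F).
Hypothesis w_prim : 3.-primitive_root w.

Lemma prim3_expr3 : w ^+ 3 = 1. Proof. exact: prim_expr_order. Qed.

Lemma prim3_neq1 : w != 1.
Proof. by rewrite -{1}(expr1 w) -(expr0 w) (eq_prim_root_expr w_prim). Qed.

Lemma prim3_neq_sqr : w != w ^+ 2.
Proof. by rewrite -{1}(expr1 w) (eq_prim_root_expr w_prim). Qed.

Lemma prim3_sqr_neq1 : w ^+ 2 != 1.
Proof. by rewrite -(expr0 w) (eq_prim_root_expr w_prim). Qed.

Lemma prim3_neq0 : w != 0.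
Proof. by apply: contra_neq (oner_neq0 F) => w0; rewrite -prim3_expr3 w0 expr0n. Qed.

Lemma prim3_sum0 : w ^+ 2 + w + 1 = 0.
Proof.
apply: (@mulIf_eq0 _ (w - 1)); first by rewrite subr_eq0 prim3_neq1.
by linear_combination (w ^+ 3 - 1); rewrite prim3_expr3 subrr.
Qed.

Lemma prim3_char : 3%:R != 0 :> F.
Proof.
apply: contra_neq prim3_neq1 => h3; apply/eqP; rewrite -subr_eq0.
have : (w - 1) ^+ 2 = 0.
  by linear_combination (w ^+ 2 + w + 1 - 3%:R * w); rewrite prim3_sum0 h3; ring.
by move/eqP; rewrite expf_eq0.
Qed.

Lemma one_add_prim3_neq0 : 1 + w != 0.
Proof.
apply: contra_neq (expf_neq0 2 prim3_neq0) => w1.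
by linear_combination (w ^+ 2 + w + 1 - (1 + w)); rewrite prim3_sum0 w1; ring.
Qed.

Lemma two_add_prim3_neq0 : 2%:R + w != 0.
Proof.
apply: contra_neq prim3_char => w2.
by linear_combination (w ^+ 2 + w + 1 - (2%:R + w) * (w - 1)); rewrite prim3_sum0 w2; ring.
Qed.

Lemma one_add_2prim3_neq0 : 1 + 2%:R * w != 0.
Proof.
apply: contra_neq prim3_char => w2.
by linear_combination (4%:R * (w ^+ 2 + w + 1) - (1 + 2%:R * w) ^+ 2);
  rewrite prim3_sum0 w2; ring.
Qed.

Lemma prod_XsubC_prim3 : ('X - 1) * ('X - w%:P) * ('X - (w ^+ 2)%:P) = 'X^3 - 1 :> {poly F}.
Proof.
linear_combination ('X^3 - 1 - (w ^+ 2 + w + 1)%:P * ('X^2 - w%:P * 'X) - (w ^+ 3 - 1)%:P).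
by rewrite prim3_sum0 prim3_expr3 subrr; ring.
Qed.

Lemma consecutive_triple_sys_210 (A B C x al : F) : al != 0 ->
  A + B + C = 0 -> A * x + B * (x + 1) + C * (x + 2%:R) = 0 ->
  A * al + B * (al * w) + C * (al * w ^+ 2) = 0 -> A = 0.
Proof.
move=> al0 e0 e1 e2.
set E0 := (X in X = 0) in e0; set E1 := (X in X = 0) in e1; set E2 := (X in X = 0) in e2.
apply: (mulIf_eq0 (_ : al * (w - 1) ^+ 2 != 0)).
  by rewrite mulf_neq0 // expf_neq0 // subr_eq0 prim3_neq1.
linear_combination (E2 - al * E0 - al * (w - 1) * (E1 - x * E0)
                    + al * (w - 1) ^+ 2 * (E0 - (E1 - x * E0))).
by rewrite e0 e1 e2; ring.
Qed.

Lemma adjacent_triple_sys_220 (A B C x y al be : F) : B != 0 -> al != 0 ->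
  A + B + C = 0 -> A * x + B * (x + 1) + C * y = 0 ->
  A * al + B * (al * w) + C * be = 0 ->
  A * al * x + B * (al * w) * (x + 1) + C * be * y = 0 -> A = 0.
Proof.
move=> B0 al0 e0 e1 e2 e3.
set E0 := (X in X = 0) in e0; set E1 := (X in X = 0) in e1.
set E2 := (X in X = 0) in e2; set E3 := (X in X = 0) in e3.
have be_eq : al * w - be = 0.
  apply: (mulIf_eq0 B0).
  by linear_combination (E3 - x * E2 - be * (E1 - x * E0)); rewrite e0 e1 e2 e3; ring.
apply: (mulIf_eq0 (_ : al * (1 - w) != 0)).
  by rewrite mulf_neq0 // subr_eq0 eq_sym prim3_neq1.
by linear_combination (E2 - al * w * E0 + C * (al * w - be)); rewrite e0 e2 be_eq; ring.
Qed.

Lemma adjacent_triple_sys_111 (A B C al be : F) : B != 0 -> al != 0 ->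
  A + B + C = 0 -> A * al + B * (al * w) + C * be = 0 ->
  A * al ^+ 2 + B * (al * w) ^+ 2 + C * be ^+ 2 = 0 -> A = 0.
Proof.
move=> B0 al0 e0 e1 e2.
set E0 := (X in X = 0) in e0; set E1 := (X in X = 0) in e1; set E2 := (X in X = 0) in e2.
have [be_al | be_al'] := eqVneq be al.
  suff : B = 0 by move/eqP: B0.
  apply: (mulIf_eq0 (_ : al * (w - 1) != 0)).
    by rewrite mulf_neq0 // subr_eq0 prim3_neq1.
  by linear_combination (E1 - al * E0 + C * (al - be)); rewrite e0 e1 be_al; ring.
(* The quadratic (t - al w)(t - be) vanishes at two of the three nodes. *)
apply: (mulIf_eq0 (_ : al * (1 - w) * (al - be) != 0)).
  by rewrite !mulf_neq0 // subr_eq0 1?eq_sym ?prim3_neq1.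
by linear_combination (E2 - (al * w + be) * E1 + al * w * be * E0); rewrite e0 e1 e2; ring.
Qed.

Lemma consecutive_quad_sys_310 (A B C D x al : F) : 2%:R != 0 :> F -> al != 0 ->
  A + B + C + D = 0 ->
  A * x + B * (x + 1) + C * (x + 2%:R) + D * (x + 3%:R) = 0 ->
  A * (x * (x - 1)) + B * ((x + 1) * x) + C * ((x + 2%:R) * (x + 1))
    + D * ((x + 3%:R) * (x + 2%:R)) = 0 ->
  A * al + B * (al * w) + C * (al * w ^+ 2) + D * (al * w ^+ 3) = 0 -> A = 0.
Proof.
move=> two0 al0 e0 e1 e2 e3.
set E0 := (X in X = 0) in e0; set E1 := (X in X = 0) in e1.
set E2 := (X in X = 0) in e2; set E3 := (X in X = 0) in e3.
apply: (mulIf_eq0 (_ : 2%:R * 3%:R * al * w * (w - 1) != 0)).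
  by rewrite !mulf_neq0 ?prim3_char ?prim3_neq0 // subr_eq0 prim3_neq1.
(* With a + b k + c k(k-1) the quadratic equal to -w^k at k = 1, 2, 3, the
   multipliers of the three moment equations are 2a, 2b and 2c. *)
linear_combination (2%:R * (E3 - D * al * (w ^+ 3 - 1))
  + al * ((6%:R * w ^+ 2 - 6%:R * w - 2%:R) * E0
          + (4%:R * w - 6%:R * w ^+ 2 + 2%:R) * (E1 - x * E0)
          + (2%:R * w ^+ 2 - w - 1) * (E2 - 2%:R * x * E1 + x * (x + 1) * E0))).
by rewrite e0 e1 e2 e3 prim3_expr3; ring.
Qed.

Lemma consecutive_quad_sys_220 (A B C D x al : F) : al != 0 ->
  A + B + C + D = 0 ->
  A * x + B * (x + 1) + C * (x + 2%:R) + D * (x + 3%:R) = 0 ->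
  A * al + B * (al * w) + C * (al * w ^+ 2) + D * (al * w ^+ 3) = 0 ->
  A * al * x + B * (al * w) * (x + 1) + C * (al * w ^+ 2) * (x + 2%:R)
    + D * (al * w ^+ 3) * (x + 3%:R) = 0 -> A = 0.
Proof.
move=> al0 e0 e1 e2 e3.
set E0 := (X in X = 0) in e0; set E1 := (X in X = 0) in e1.
set E2 := (X in X = 0) in e2; set E3 := (X in X = 0) in e3.
have M1 : B + 2%:R * C + 3%:R * D = 0.
  by linear_combination (E1 - x * E0); rewrite e0 e1; ring.
have P0 : A + B * w + C * w ^+ 2 + D = 0.
  apply: (mulIf_eq0 al0).
  by linear_combination (E2 - D * al * (w ^+ 3 - 1)); rewrite e2 prim3_expr3; ring.
have P1 : B * w + 2%:R * C * w ^+ 2 + 3%:R * D = 0.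
  apply: (mulIf_eq0 al0).
  linear_combination (E3 - x * E2 - 3%:R * D * al * (w ^+ 3 - 1)).
  by rewrite e2 e3 prim3_expr3; ring.
have V : B + C * (1 + w) = 0.
  apply: (mulIf_eq0 (_ : 1 - w != 0)); first by rewrite subr_eq0 eq_sym prim3_neq1.
  by linear_combination (E0 - (A + B * w + C * w ^+ 2 + D)); rewrite e0 P0; ring.
have C0 : C = 0.
  apply: (mulIf_eq0 (_ : w ^+ 2 - 1 != 0)); first by rewrite subr_eq0 prim3_sqr_neq1.
  linear_combination ((B * w + 2%:R * C * w ^+ 2 + 3%:R * D)
    - (B + 2%:R * C + 3%:R * D) - (w - 1) * (B + C * (1 + w))).
  by rewrite P1 M1 V; ring.
have B0 : B = 0 by linear_combination (B + C * (1 + w) - C * (1 + w)); rewrite V C0; ring.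
have D0 : D = 0.
  apply: (mulfI_eq0 prim3_char).
  by linear_combination (B + 2%:R * C + 3%:R * D - B - 2%:R * C); rewrite M1 B0 C0; ring.
by linear_combination (E0 - B - C - D); rewrite e0 B0 C0 D0; ring.
Qed.

Lemma consecutive_quad_sys_211 (A B C D x al be : F) : al != 0 -> be != 0 ->
  A + B + C + D = 0 ->
  A * x + B * (x + 1) + C * (x + 2%:R) + D * (x + 3%:R) = 0 ->
  A * al + B * (al * w) + C * (al * w ^+ 2) + D * (al * w ^+ 3) = 0 ->
  A * be + B * (be * w ^+ 2) + C * (be * w ^+ 4) + D * (be * w ^+ 6) = 0 -> A = 0.
Proof.
move=> al0 be0 e0 e1 e2 e3.
set E0 := (X in X = 0) in e0; set E1 := (X in X = 0) in e1.
set E2 := (X in X = 0) in e2; set E3 := (X in X = 0) in e3.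
have M1 : B + 2%:R * C + 3%:R * D = 0.
  by linear_combination (E1 - x * E0); rewrite e0 e1; ring.
have P0 : A + B * w + C * w ^+ 2 + D = 0.
  apply: (mulIf_eq0 al0).
  by linear_combination (E2 - D * al * (w ^+ 3 - 1)); rewrite e2 prim3_expr3; ring.
have Q0 : A + B * w ^+ 2 + C * w + D = 0.
  apply: (mulIf_eq0 be0).
  linear_combination (E3 - be * C * w * (w ^+ 3 - 1) - be * D * (w ^+ 3 - 1) * (w ^+ 3 + 1)).
  by rewrite e3 prim3_expr3; ring.
have BC : B - C = 0.
  apply: (mulIf_eq0 (_ : w - w ^+ 2 != 0)); first by rewrite subr_eq0 prim3_neq_sqr.
  by linear_combination ((A + B * w + C * w ^+ 2 + D) - (A + B * w ^+ 2 + C * w + D));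
    rewrite P0 Q0; ring.
have B0 : B = 0.
  apply: (mulIf_eq0 prim3_char).
  linear_combination (E0 - (A + B * w + C * w ^+ 2 + D) + (B - C) * (1 - w ^+ 2)
                      + B * (w ^+ 2 + w + 1)).
  by rewrite e0 P0 BC prim3_sum0; ring.
have C0 : C = 0 by linear_combination (B - (B - C)); rewrite BC B0; ring.
have D0 : D = 0.
  apply: (mulfI_eq0 prim3_char).
  by linear_combination (B + 2%:R * C + 3%:R * D - B - 2%:R * C); rewrite M1 B0 C0; ring.
by linear_combination (E0 - B - C - D); rewrite e0 B0 C0 D0; ring.
Qed.

End PrimitiveCubeRoot.

Section CyclicSupport.
Variables (K : zmodType) (m : nat).
Implicit Types (c : word K m) (i s t u : 'I_m).

Definition supp c := [set i | c i != 0].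
Definition run_starts c := [set i | (c i == 0) && (c (ordS i) != 0)].
Definition adjacent_pairs c := [set i | (c i != 0) && (c (ordS i) != 0)].
Definition pair_wt c := #|[set i | (c i != 0) || (c (ordS i) != 0)]|.
Definition supported_on c (L : seq 'I_m) := forall i, i \notin L -> c i = 0.

Lemma pair_wtE c : pair_wt c = (#|supp c| + #|run_starts c|)%N.
Proof.
rewrite /pair_wt -cardsUI.
have -> : supp c :&: run_starts c = set0.
  by apply/setP=> i; rewrite !inE; case: (c i == 0); rewrite ?andbF.
rewrite cards0 addn0; apply: eq_card => i; rewrite !inE.
by case: (c i == 0).
Qed.

Lemma card_supp_adjacent c : #|supp c| = (#|adjacent_pairs c| + #|run_starts c|)%N.
Proof.
rewrite -(card_preimset (supp c) (@ordS_inj m)) -cardsUI.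
have -> : adjacent_pairs c :&: run_starts c = set0.
  by apply/setP=> i; rewrite !inE; case: (c i == 0); rewrite ?andbF.
rewrite cards0 addn0; apply: eq_card => i; rewrite !inE.
by case: (c i == 0); rewrite ?andbT ?orbF.
Qed.

Lemma card_supp_gt0 c : (0 < #|supp c|)%N = (c != 0).
Proof.
rewrite card_gt0; congr negb; apply/eqP/eqP => [S0 | ->].
  apply/ffunP=> i; rewrite ffunE; apply/eqP; apply: contraT => ci.
  by rewrite -(in_set0 i) -S0 inE.
by apply/setP=> i; rewrite !inE ffunE eqxx.
Qed.

Lemma ordS_neq i : (1 < m)%N -> ordS i != i.
Proof.
move=> m_gt1; apply/eqP => /(congr1 val) /=.
have [lt_im | eq_im] : (i.+1 < m \/ i.+1 = m)%N by have := ltn_ord i; lia.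
  by rewrite modn_small //; lia.
by rewrite eq_im modnn; lia.
Qed.

Lemma iter_ordS_val t k : val (iter k (@ordS m) t) = ((t + k) %% m)%N.
Proof.
elim: k => [|k IH]; first by rewrite addn0 modn_small.
by rewrite iterS /= IH addnS -[((t + k) %% m).+1]addn1 -[(t + k).+1]addn1 modnDml.
Qed.

Lemma iter_ordS_inj t j j' : (j < m)%N -> (j' < m)%N ->
  iter j (@ordS m) t = iter j' (@ordS m) t -> j = j'.
Proof.
move=> ltjm ltj'm /(congr1 val); rewrite !iter_ordS_val => /eqP.
by rewrite eqn_modDl !modn_small // => /eqP.
Qed.

Lemma iter_ordS_surj t u : exists2 j, (j < m)%N & u = iter j (@ordS m) t.
Proof.
have ltt := ltn_ord t; have ltu := ltn_ord u.
case: (leqP t u) => le_tu.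
  exists (u - t)%N; first lia.
  by apply: val_inj; rewrite iter_ordS_val subnKC // modn_small.
exists (u + m - t)%N; first lia.
apply: val_inj; rewrite iter_ordS_val (_ : (t + (u + m - t) = u + m)%N); last lia.
by rewrite modnDr modn_small.
Qed.

Lemma run_starts_eq0 c : run_starts c = set0 -> c != 0 -> supp c = setT.
Proof.
move=> T0; rewrite -card_supp_gt0 => /card_gt0P [s]; rewrite inE => cs.
have back i : c (ordS i) != 0 -> c i != 0.
  move=> cSi; apply: contraT; rewrite negbK => ci.
  by rewrite -(in_set0 i) -T0 inE ci.
apply/setP=> u; rewrite !inE; have [j _ s_eq] := iter_ordS_surj u s.
by move: cs; rewrite s_eq; clear s_eq; elim: j => [// | j IH] /back.
Qed.

Lemma run_starts1_window c t : run_starts c = [set t] -> forall u, c u != 0 ->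
  exists2 j, (0 < j <= #|supp c|)%N & u = iter j (@ordS m) t.
Proof.
move=> Tt u cu; have [j ltjm u_eq] := iter_ordS_surj t u.
have [ct _] : c t = 0 /\ c (ordS t) != 0.
  by have := set11 t; rewrite -Tt inE => /andP [/eqP].
have j_gt0 : (0 < j)%N by case: j u_eq {ltjm} => // u_eq; move: cu; rewrite u_eq ct eqxx.
(* Walking back from u, a zero before a nonzero entry could only sit at t. *)
have run k l : (j - l)%N = k -> (0 < l <= j)%N -> c (iter l (@ordS m) t) != 0.
  elim: k l => [| k IH] l jl /andP [l_gt0 le_lj].
    by rewrite (_ : l = j) -?u_eq //; lia.
  have cSl : c (ordS (iter l (@ordS m) t)) != 0 by rewrite -iterS IH //; lia.
  apply: contraT; rewrite negbK => cl.
  have : iter l (@ordS m) t \in run_starts c by rewrite inE cl cSl.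
  rewrite Tt inE => /eqP l_t.
  suff : l = 0%N by lia.
  by apply: (@iter_ordS_inj t l 0 _ _ l_t); lia.
exists j; rewrite ?j_gt0 //=.
have inj_f : injective (fun l : 'I_j => iter l.+1 (@ordS m) t).
  move=> l l' /iter_ordS_inj eq_l; apply: val_inj; apply: succn_inj.
  by apply: eq_l; have := ltn_ord l; have := ltn_ord l'; lia.
rewrite -[j in (j <= _)%N]card_ord -(card_imset _ inj_f).
apply/subset_leq_card/subsetP => _ /imsetP [l _ ->]; rewrite inE.
by apply: run; [reflexivity | have := ltn_ord l; lia].
Qed.

Lemma supported_on_supp c (L : seq 'I_m) : supp c \subset [set i in L] -> supported_on c L.
Proof.
move=> /subsetP S_L i iL; apply/eqP; apply: contraNT iL => ci.
by have := S_L i; rewrite !inE => ->.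
Qed.

Lemma card_supp_gt1 c : c != 0 -> (forall s, supported_on c [:: s] -> c s = 0) ->
  (1 < #|supp c|)%N.
Proof.
rewrite -card_supp_gt0 => S_gt0 single; rewrite ltn_neqAle S_gt0 andbT eq_sym.
apply/cards1P => -[s S_eq]; have := set11 s; rewrite -S_eq inE single ?eqxx //.
by apply: supported_on_supp; rewrite S_eq; apply/subsetP => i; rewrite !inE.
Qed.

Lemma card_supp_gt2 c : c != 0 -> (forall s, supported_on c [:: s] -> c s = 0) ->
  (forall s u, s != u -> supported_on c [:: s; u] -> c s = 0) -> (2 < #|supp c|)%N.
Proof.
move=> c0 single pair; have := card_supp_gt1 c0 single.
rewrite leq_eqVlt eq_sym => /orP [/cards2P [s [u [su S_eq]]] | //].
have := setU11 s [set u]; rewrite -S_eq inE (pair s u) ?eqxx //.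
by apply: supported_on_supp; rewrite S_eq; apply/subsetP => i; rewrite !inE.
Qed.

Lemma card_run_starts0 c : c != 0 -> #|run_starts c| = 0%N -> #|supp c| = m.
Proof. by move=> c0 /cards0_eq T0; rewrite run_starts_eq0 // cardsT card_ord. Qed.

Lemma card_run_starts1 c : #|run_starts c| = 1%N ->
  exists t, supported_on c [seq iter j.+1 (@ordS m) t | j <- iota 0 #|supp c|]
            /\ c (ordS t) != 0.
Proof.
move=> /eqP /cards1P [t Tt]; exists t; split.
  move=> i; apply: contraNeq => ci; have [j /andP [j_gt0 le_jS] ->] := run_starts1_window Tt ci.
  rewrite (_ : j = j.-1.+1); last by lia.
  by apply: (map_f (fun j => iter j.+1 (@ordS m) t)); rewrite mem_iota; lia.
by have := set11 t; rewrite -Tt inE => /andP [].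
Qed.

Lemma card_supp3_adjacent c : (1 < m)%N -> #|supp c| = 3%N -> (0 < #|adjacent_pairs c|)%N ->
  exists s u, [/\ u \notin [:: s; ordS s], supported_on c [:: s; ordS s; u],
                  c s != 0 & c (ordS s) != 0].
Proof.
move=> m_gt1 S3 /card_gt0P [s]; rewrite inE => /andP [cs cSs].
have : ~~ (supp c \subset [set s; ordS s]).
  by apply/negP => /subset_leq_card; rewrite S3 cards2; case: (_ != _).
case/subsetPn => u; rewrite [u \in supp c]inE => cu uN.
exists s, u; split => //; first by move: uN; rewrite !inE.
apply: supported_on_supp; apply/subsetP => v vS.
suff : v \in [set s; ordS s; u] by rewrite !inE -orbA.
have sub : [set s; ordS s; u] \subset supp c.
  by apply/subsetP => x; rewrite !inE -orbA => /or3P [] /eqP ->.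
have card3 : #|[set s; ordS s; u]| = 3%N.
  rewrite [[set s; ordS s; u]]setUC cardsU1 cards2 eq_sym (ordS_neq s m_gt1).
  by rewrite uN.
by have /(subset_cardP (etrans card3 (esym S3))) -> := sub.
Qed.

Lemma pair_wt_ge4 c : (4 <= m)%N -> c != 0 ->
  (forall s, supported_on c [:: s] -> c s = 0) ->
  (forall s, supported_on c [:: s; ordS s] -> c s = 0) ->
  (4 <= pair_wt c)%N.
Proof.
move=> m4 c0 single adjacent; rewrite pair_wtE.
have S_gt1 := card_supp_gt1 c0 single.
have [T0 | [T1 | T_gt1]] : #|run_starts c| = 0%N \/ #|run_starts c| = 1%N
    \/ (1 < #|run_starts c|)%N by lia.
- by rewrite card_run_starts0 // T0; lia.
- have [S2 | S_gt2] : #|supp c| = 2%N \/ (2 < #|supp c|)%N by lia.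
    have [t []] := card_run_starts1 T1; rewrite S2 /= => sup cSt.
    by move: cSt; rewrite adjacent ?eqxx.
  by lia.
- by lia.
Qed.

Lemma pair_wt_ge5 c : (5 <= m)%N -> c != 0 ->
  (forall s, supported_on c [:: s] -> c s = 0) ->
  (forall s u, s != u -> supported_on c [:: s; u] -> c s = 0) ->
  (forall s, supported_on c [:: s; ordS s; ordS (ordS s)] -> c s = 0) ->
  (5 <= pair_wt c)%N.
Proof.
move=> m5 c0 single pair consecutive; rewrite pair_wtE.
have S_gt2 := card_supp_gt2 c0 single pair.
have [T0 | [T1 | T_gt1]] : #|run_starts c| = 0%N \/ #|run_starts c| = 1%N
    \/ (1 < #|run_starts c|)%N by lia.
- by rewrite card_run_starts0 // T0; lia.
- have [S3 | S_gt3] : #|supp c| = 3%N \/ (3 < #|supp c|)%N by lia.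
    have [t []] := card_run_starts1 T1; rewrite S3 /= => sup cSt.
    by move: cSt; rewrite consecutive ?eqxx.
  by lia.
- by lia.
Qed.

Lemma pair_wt_ge6 c : (6 <= m)%N -> c != 0 ->
  (forall s, supported_on c [:: s] -> c s = 0) ->
  (forall s u, s != u -> supported_on c [:: s; u] -> c s = 0) ->
  (forall s u, u \notin [:: s; ordS s] -> supported_on c [:: s; ordS s; u] ->
     c (ordS s) != 0 -> c s = 0) ->
  (forall s, supported_on c [:: s; ordS s; ordS (ordS s); ordS (ordS (ordS s))] -> c s = 0) ->
  (6 <= pair_wt c)%N.
Proof.
move=> m6 c0 single pair adjacent consecutive; rewrite pair_wtE.
have S_gt2 := card_supp_gt2 c0 single pair.
have [S3 | [S4 | S_gt4]] : #|supp c| = 3%N \/ #|supp c| = 4%N \/ (4 < #|supp c|)%N by lia.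
- have [T_le2 | T_gt2] : (#|run_starts c| <= 2)%N \/ (2 < #|run_starts c|)%N by lia.
    have A_gt0 : (0 < #|adjacent_pairs c|)%N by have := card_supp_adjacent c; lia.
    have [|s [u [uN sup cs cSs]]] := card_supp3_adjacent (_ : 1 < m)%N S3 A_gt0.
      by lia.
    by move: cs; rewrite (adjacent s u) ?eqxx.
  by lia.
- have [T0 | [T1 | T_gt1]] : #|run_starts c| = 0%N \/ #|run_starts c| = 1%N
      \/ (1 < #|run_starts c|)%N by lia.
  + by rewrite card_run_starts0 // in S4; lia.
  + have [t []] := card_run_starts1 T1; rewrite S4 /= => sup cSt.
    by move: cSt; rewrite consecutive ?eqxx.
  + by lia.
- have [T0 | T_gt0] : #|run_starts c| = 0%N \/ (0 < #|run_starts c|)%N by lia.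
    by rewrite card_run_starts0 // T0; lia.
  by lia.
Qed.

End CyclicSupport.

Lemma derivn_XsubC_exp_mul (R : comNzRingType) (a : R) (k j : nat) (u : {poly R}) :
  (j <= k)%N -> exists v, (('X - a%:P) ^+ k * u)^`(j) = ('X - a%:P) ^+ (k - j) * v.
Proof.
elim: j => [|j IH] le_jk; first by exists u; rewrite subn0.
rewrite derivnS; have [v ->] := IH (ltnW le_jk).
rewrite (_ : (k - j = (k - j.+1).+1)%N); last by rewrite subnSK.
exists (v *+ (k - j.+1).+1 + ('X - a%:P) * v^`()).
by rewrite derivM deriv_exp derivXsubC mul1r exprS; ring.
Qed.

Lemma natr_ffact2 (R : nzRingType) (k : nat) : ((k ^_ 2)%:R : R) = k%:R * (k%:R - 1).
Proof.
case: k => [|k]; first by rewrite mul0r.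
by rewrite ffactnS ffactn1 natrM /= -[k.+1]addn1 natrD addrK.
Qed.

Section DerivativeChecks.
Variables (F : fieldType) (n : nat).
Hypothesis n_eq0 : n%:R = 0 :> F.
Implicit Types (c : word F n) (a : F) (i : 'I_n).

Definition deriv_check c a j := \sum_(i < n) c i * a ^+ i * (i ^_ j)%:R.

Lemma deriv_checkE c a j : deriv_check c a j = a ^+ j * ((word_poly c)^`(j)).[a].
Proof.
rewrite /word_poly /deriv_check linear_sum horner_sum mulr_sumr; apply: eq_bigr => i _.
rewrite linearZ /= derivnXn hornerZ hornerMn hornerXn.
have [le_ji | lt_ij] := leqP j i; last by rewrite ffact_small // !mulr0n !mulr0.
by rewrite !mulrnAr mulr1 mulrCA -exprD subnKC // mulrA.
Qed.

Lemma derivn_mul_Xn_sub1 (q : {poly F}) j :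
  (q * ('X^n - 1))^`(j) = q^`(j) * ('X^n - 1).
Proof.
elim: j => [//|j IH].
by rewrite !derivnS IH derivM derivB derivXn derivC subr0 -mulr_natr -polyC_natr n_eq0
  !mulr0 addr0.
Qed.

Lemma deriv_check_cyclic_code a k u c j : a ^+ n = 1 ->
  cyclic_code (('X - a%:P) ^+ k * u) c -> (j < k)%N -> deriv_check c a j = 0.
Proof.
move=> an1 [f cf] lt_jk; rewrite deriv_checkE cf.
have -> : (('X - a%:P) ^+ k * u * f) %% ('X^n - 1)
    = ('X - a%:P) ^+ k * (u * f) - (('X - a%:P) ^+ k * u * f) %/ ('X^n - 1) * ('X^n - 1).
  by rewrite mulrA {2}(divp_eq (_ * f) ('X^n - 1)) addrAC subrr add0r.
rewrite derivnB derivn_mul_Xn_sub1.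
have [v ->] := derivn_XsubC_exp_mul a (u * f) (ltnW lt_jk).
rewrite hornerD hornerN !hornerM !hornerE an1 !subrr expr0n subn_eq0 leqNgt lt_jk.
by rewrite !(mul0r, mulr0) oppr0 addr0 mulr0.
Qed.

Lemma deriv_check_supported c a j (L : seq 'I_n) : supported_on c L -> uniq L ->
  deriv_check c a j = \sum_(i <- L) c i * a ^+ i * (i ^_ j)%:R.
Proof.
move=> c_L uniq_L; rewrite /deriv_check (bigID (mem L)) /= [X in _ + X]big1 ?addr0.
  by rewrite big_uniq.
by move=> i /c_L ->; rewrite !mul0r.
Qed.

Lemma natr_ordS i : ((ordS i : nat)%:R : F) = (i : nat)%:R + 1.
Proof. by rewrite /= natr1 {2}(divn_eq i.+1 n) natrD natrM n_eq0 mulr0 add0r. Qed.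

Lemma expr_ordS a i : a ^+ n = 1 -> a ^+ (ordS i) = a ^+ i * a.
Proof. by move=> an1; rewrite /= (expr_mod _ an1) exprSr. Qed.

End DerivativeChecks.

Section CyclicCodes.
Variables (F : fieldType) (n : nat).
Implicit Types (g q : {poly F}) (c x y : word F n).

Lemma word_polyB x y : word_poly (x - y) = word_poly x - word_poly y.
Proof. by rewrite /word_poly -sumrB; apply: eq_bigr => i _; rewrite !ffunE scalerBl. Qed.

Lemma cyclic_code0 g : cyclic_code g (0 : word F n).
Proof. by exists 0; rewrite mulr0 mod0p /word_poly big1 // => i _; rewrite ffunE scale0r. Qed.

Lemma cyclic_codeB g x y : cyclic_code g x -> cyclic_code g y -> cyclic_code g (x - y).
Proof.
by move=> [f1 xf1] [f2 yf2]; exists (f1 - f2); rewrite word_polyB xf1 yf2 mulrBr modpD modpN.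
Qed.

Lemma cyclic_code_dvdp g h c : h %| g -> cyclic_code g c -> cyclic_code h c.
Proof. by move=> /divpK hg [f cf]; exists (g %/ h * f); rewrite mulrCA mulrA hg. Qed.

Definition poly_word q : word F n := [ffun i : 'I_n => q`_i].

Lemma size_poly_supp q (L : seq nat) : (forall k, (q`_k != 0) = (k \in L)) ->
  all (fun k => k < n)%N L -> (size q <= n)%N.
Proof.
move=> qL /allP L_n; apply/leq_sizeP => j le_nj; apply/eqP; apply: contraTT le_nj.
by rewrite qL -ltnNge => /L_n.
Qed.

Lemma word_poly_poly_word q : (size q <= n)%N -> word_poly (poly_word q) = q.
Proof.
move=> size_q; rewrite /word_poly.
rewrite (eq_bigr (fun i : 'I_n => q`_(nat_of_ord i) *: 'X^(nat_of_ord i))) => [|i _].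
  rewrite -poly_def; apply/polyP => k; rewrite coef_poly; case: ltnP => // le_nk.
  by rewrite nth_default // (leq_trans size_q).
by rewrite ffunE.
Qed.

Lemma cyclic_code_poly_word g f : (0 < n)%N -> (size (g * f)%R <= n)%N ->
  cyclic_code g (poly_word (g * f)).
Proof.
by move=> n_gt0 size_gf; exists f; rewrite word_poly_poly_word // modp_small ?size_Xn_sub_1.
Qed.

Lemma poly_word_neq0 q k : (k < n)%N -> q`_k != 0 -> poly_word q != 0.
Proof.
move=> lt_kn; apply: contraNneq => /(congr1 (fun c => c (Ordinal lt_kn))).
by rewrite !ffunE => ->.
Qed.

End CyclicCodes.

Section SparsePolys.
Variable F : fieldType.

Definition sparse_poly (l : seq (F * nat)) : {poly F} := \sum_(e <- l) e.1 *: 'X^(e.2).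

Lemma coef_sparse_poly_neq0 l k : uniq (map snd l) -> all (fun e => e.1 != 0) l ->
  ((sparse_poly l)`_k != 0) = (k \in map snd l).
Proof.
rewrite /sparse_poly; elim: l k => [|e l IH] k /=; first by rewrite big_nil coef0 eqxx.
move=> /andP [e_l uniq_l] /andP [e1_0 l_0]; rewrite big_cons coefD coefZ coefXn inE.
have [-> | ke] := eqVneq k e.2; last by rewrite mulr0 add0r IH.
have /eqP -> : (\sum_(x <- l) x.1 *: 'X^(x.2))`_e.2 == 0 by apply: contraNT e_l; rewrite IH.
by rewrite mulr1 addr0 e1_0.
Qed.

End SparsePolys.

Section PairDistance.
Variables (F : finFieldType) (n : nat).
Implicit Types (g q : {poly F}) (c x y : word F n).

Lemma pair_dist_wt x y : pair_dist x y = pair_wt (x - y).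
Proof. by apply: eq_card => i; rewrite !inE !ffunE !subr_eq0. Qed.

Lemma min_pair_dist_cyclic g c d : cyclic_code g c -> c != 0 -> pair_wt c = d ->
  (forall c, cyclic_code g c -> c != 0 -> (d <= pair_wt c)%N) ->
  min_pair_dist (@cyclic_code _ n g) d.
Proof.
move=> gc c0 wt_c wt_min; split.
  by exists c, 0; split; [|exact: cyclic_code0 | exact/eqP | rewrite pair_dist_wt subr0].
move=> x y gx gy xy; rewrite pair_dist_wt; apply: wt_min; first exact: cyclic_codeB.
by rewrite subr_eq0; apply/eqP.
Qed.

Lemma pair_wt_poly_word q (L L' : seq nat) : (forall k, (q`_k != 0) = (k \in L)) ->
  uniq L' -> all (fun k => k < n)%N L' ->
  (forall i, (i < n)%N ->
     ((i \in L) || ((if i.+1 == n then 0 else i.+1)%N \in L)) = (i \in L')) ->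
  pair_wt (poly_word n q) = size L'.
Proof.
move=> qL uniq_L' L'_n L'_pairs.
have -> : pair_wt (poly_word n q) = #|[pred i : 'I_n | val i \in L']|.
  apply: eq_card => i; rewrite !inE !ffunE !qL -L'_pairs //=.
  congr (_ || (_ \in L)); have := ltn_ord i; case: eqP => [-> _ | ne_in lt_in].
    by rewrite modnn.
  by rewrite modn_small //; lia.
have -> : #|[pred i : 'I_n | val i \in L']| = #|(pmap insub L' : seq 'I_n)|.
  by apply: eq_card => i; rewrite [in RHS]mem_pmap_sub.
move/card_uniqP: (pmap_sub_uniq 'I_n uniq_L') => ->.
by rewrite size_pmap_sub; apply/eqP; rewrite -all_count.
Qed.

End PairDistance.

Section SymbolPairCodes.
Variables (p : nat) (w : 'F_p).
Hypotheses (p_prime : prime p) (p_odd : odd p) (w_prim : 3.-primitive_root w).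
Local Notation n := (3 * p)%N.
Implicit Types (c : word 'F_p n) (s u : 'I_n).

Lemma p_gt2 : (2 < p)%N.
Proof. by have := prime_gt1 p_prime; case: p p_odd => [|[|[|q]]]. Qed.

Lemma n_ge9 : (9 <= n)%N. Proof. by have := p_gt2; lia. Qed.

Lemma natr_n : (n%:R : 'F_p) = 0.
Proof. by rewrite natrM pchar_Fp_0 // mulr0. Qed.

Lemma two_neq0 : 2%:R != 0 :> 'F_p.
Proof.
rewrite -(dvdn_pcharf (pchar_Fp p_prime)); apply/negP => /(dvdn_leq (isT : (0 < 2)%N)).
by have := p_gt2; lia.
Qed.

Lemma w_exprn : w ^+ n = 1.
Proof. by rewrite exprM (prim3_expr3 w_prim) expr1n. Qed.

Lemma w2_exprn : (w ^+ 2) ^+ n = 1.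
Proof. by rewrite exprAC w_exprn expr1n. Qed.

Lemma gen3_dvdp r1 r2 r3 m1 m2 m3 : (m1 <= r1)%N -> (m2 <= r2)%N -> (m3 <= r3)%N ->
  gen3 w m1 m2 m3 %| gen3 w r1 r2 r3.
Proof. by move=> *; rewrite !dvdp_mul ?dvdp_exp2l. Qed.

Lemma Ccode_sub r1 r2 r3 m1 m2 m3 c : (m1 <= r1)%N -> (m2 <= r2)%N -> (m3 <= r3)%N ->
  Ccode w r1 r2 r3 c -> Ccode w m1 m2 m3 c.
Proof. by move=> le1 le2 le3; apply: cyclic_code_dvdp (gen3_dvdp le1 le2 le3). Qed.

Lemma Ccode_deriv_checks r1 r2 r3 c : Ccode w r1 r2 r3 c ->
  [/\ forall j, (j < r1)%N -> deriv_check c 1 j = 0,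
      forall j, (j < r2)%N -> deriv_check c w j = 0 &
      forall j, (j < r3)%N -> deriv_check c (w ^+ 2) j = 0].
Proof.
rewrite /Ccode /gen3 => cC; split=> j lt_j.
- apply: (deriv_check_cyclic_code (u := ('X - w%:P) ^+ r2 * ('X - (w ^+ 2)%:P) ^+ r3) natr_n
    (expr1n _ _) _ lt_j).
  by rewrite polyC1 mulrA.
- apply: (deriv_check_cyclic_code (u := ('X - 1) ^+ r1 * ('X - (w ^+ 2)%:P) ^+ r3) natr_n
    w_exprn _ lt_j).
  by rewrite mulrCA mulrA.
- apply: (deriv_check_cyclic_code (u := ('X - 1) ^+ r1 * ('X - w%:P) ^+ r2) natr_n
    w2_exprn _ lt_j).
  by rewrite mulrC.
Qed.

Lemma uniq_iter_ordS s k : (k <= n)%N -> uniq [seq iter j (@ordS n) s | j <- iota 0 k].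
Proof.
move=> le_kn; rewrite map_inj_in_uniq ?iota_uniq // => a b; rewrite !mem_iota => lt_a lt_b.
by apply: iter_ordS_inj; lia.
Qed.

Lemma uniq_iter_ordS_le4 s k : (k <= 4)%N -> uniq [seq iter j (@ordS n) s | j <- iota 0 k].
Proof. by move=> le_k4; apply: uniq_iter_ordS; have := n_ge9; lia. Qed.

Lemma wX_neq0 k : w ^+ k != 0.
Proof. exact/expf_neq0/(prim3_neq0 w_prim). Qed.

Ltac expand_deriv_checks sup uniq_L :=
  rewrite !(deriv_check_supported _ _ sup uniq_L) !big_cons !big_nil !addr0 ?ffactn0 ?ffactn1
    ?natr_ffact2 ?(natr_ordS natr_n) ?expr1n ?(expr_ordS _ w_exprn) ?(expr_ordS _ w2_exprn).

Lemma Ccode_010_single c s : Ccode w 0 1 0 c -> supported_on c [:: s] -> c s = 0.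
Proof.
move=> /Ccode_deriv_checks [_ /(_ 0%N isT) + _] sup.
rewrite (deriv_check_supported _ _ sup) // big_seq1 ffactn0 mulr1.
exact: mulIf_eq0 (wX_neq0 s).
Qed.

Lemma Ccode_020_adjacent_pair c s : Ccode w 0 2 0 c -> supported_on c [:: s; ordS s] -> c s = 0.
Proof.
move=> /Ccode_deriv_checks [_ chk_w _] sup; move: (chk_w 0%N isT) (chk_w 1%N isT).
expand_deriv_checks sup (uniq_iter_ordS_le4 s (isT : 2 <= 4)%N) => e0 e1.
apply: (adjacent_pair_sys_020 (B := c (ordS s)) (be := w ^+ s * w) (x := (s : nat)%:R)
         (wX_neq0 s)).
  by rewrite -[RHS]e0; ring.
by rewrite -[RHS]e1; ring.
Qed.

Lemma Ccode_210_pair c s u : Ccode w 2 1 0 c -> s != u -> supported_on c [:: s; u] -> c s = 0.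
Proof.
move=> /Ccode_deriv_checks [chk_1 chk_w _] su sup.
have uniq_su : uniq [:: s; u] by rewrite /= inE su.
move: (chk_1 0%N isT) (chk_1 1%N isT) (chk_w 0%N isT); expand_deriv_checks sup uniq_su => e0 e1 e2.
move: su; apply: contraNeq => cs.
have [s_u ws_wu] : (s : nat)%:R = (u : nat)%:R :> 'F_p /\ w ^+ s = w ^+ u.
  apply: (pair_sys_210 (B := c u) cs).
  - by rewrite -[RHS]e0; ring.
  - by rewrite -[RHS]e1; ring.
  - by rewrite -[RHS]e2; ring.
have mod_p : (s == u %[mod p])%N by rewrite -!(val_Fp_nat p_prime) s_u.
have mod_3 : (s == u %[mod 3])%N by rewrite -(eq_prim_root_expr w_prim) ws_wu.
have coprime_3p : coprime 3 p.
  rewrite prime_coprime // dvdn_prime2 //; apply/eqP => p3.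
  by have := prim3_char w_prim; rewrite -(dvdn_pcharf (pchar_Fp p_prime)) -p3.
have : (s == u %[mod n])%N by rewrite chinese_remainder // mod_3 mod_p.
by rewrite !modn_small.
Qed.

Lemma Ccode_210_consecutive_triple c s : Ccode w 2 1 0 c ->
  supported_on c [:: s; ordS s; ordS (ordS s)] -> c s = 0.
Proof.
move=> /Ccode_deriv_checks [chk_1 chk_w _] sup.
move: (chk_1 0%N isT) (chk_1 1%N isT) (chk_w 0%N isT).
expand_deriv_checks sup (uniq_iter_ordS_le4 s (isT : 3 <= 4)%N) => e0 e1 e2.
apply: (consecutive_triple_sys_210 w_prim (B := c (ordS s)) (C := c (ordS (ordS s)))
         (x := (s : nat)%:R) (wX_neq0 s)).
- by rewrite -[RHS]e0; ring.
- by rewrite -[RHS]e1; ring.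
- by rewrite -[RHS]e2; ring.
Qed.

Lemma uniq_adjacent_triple s u : u \notin [:: s; ordS s] -> uniq [:: s; ordS s; u].
Proof.
move=> uN; have := uniq_iter_ordS_le4 s (isT : 2 <= 4)%N.
rewrite /= !inE !negb_or !andbT in uN * => ss; case/andP: uN => us uSs.
by rewrite ss ![_ == u]eq_sym us uSs.
Qed.

Lemma Ccode_300_adjacent_triple c s u : Ccode w 3 0 0 c -> u \notin [:: s; ordS s] ->
  supported_on c [:: s; ordS s; u] -> c (ordS s) != 0 -> c s = 0.
Proof.
move=> /Ccode_deriv_checks [chk_1 _ _] uN sup cSs.
move: (chk_1 0%N isT) (chk_1 1%N isT) (chk_1 2%N isT).
expand_deriv_checks sup (uniq_adjacent_triple uN) => e0 e1 e2.
apply: (adjacent_triple_sys_300 (C := c u) (x := (s : nat)%:R) (y := (u : nat)%:R) cSs).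
- by rewrite -[RHS]e0; ring.
- by rewrite -[RHS]e1; ring.
- by rewrite -[RHS]e2; ring.
Qed.

Lemma Ccode_220_adjacent_triple c s u : Ccode w 2 2 0 c -> u \notin [:: s; ordS s] ->
  supported_on c [:: s; ordS s; u] -> c (ordS s) != 0 -> c s = 0.
Proof.
move=> /Ccode_deriv_checks [chk_1 chk_w _] uN sup cSs.
move: (chk_1 0%N isT) (chk_1 1%N isT) (chk_w 0%N isT) (chk_w 1%N isT).
expand_deriv_checks sup (uniq_adjacent_triple uN) => e0 e1 e2 e3.
apply: (adjacent_triple_sys_220 w_prim (C := c u) (x := (s : nat)%:R) (y := (u : nat)%:R)
         (be := w ^+ u) cSs (wX_neq0 s)).
- by rewrite -[RHS]e0; ring.
- by rewrite -[RHS]e1; ring.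
- by rewrite -[RHS]e2; ring.
- by rewrite -[RHS]e3; ring.
Qed.

Lemma Ccode_111_adjacent_triple c s u : Ccode w 1 1 1 c -> u \notin [:: s; ordS s] ->
  supported_on c [:: s; ordS s; u] -> c (ordS s) != 0 -> c s = 0.
Proof.
move=> /Ccode_deriv_checks [chk_1 chk_w chk_w2] uN sup cSs.
move: (chk_1 0%N isT) (chk_w 0%N isT) (chk_w2 0%N isT).
expand_deriv_checks sup (uniq_adjacent_triple uN) => e0 e1 e2.
apply: (adjacent_triple_sys_111 w_prim (C := c u) (be := w ^+ u) cSs (wX_neq0 s)).
- by rewrite -[RHS]e0; ring.
- by rewrite -[RHS]e1; ring.
- by rewrite -[RHS]e2 ![(w ^+ 2) ^+ _]exprAC; ring.
Qed.

Local Notation quad s := [:: s; ordS s; ordS (ordS s); ordS (ordS (ordS s))].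

Lemma Ccode_310_consecutive_quad c s : Ccode w 3 1 0 c -> supported_on c (quad s) -> c s = 0.
Proof.
move=> /Ccode_deriv_checks [chk_1 chk_w _] sup.
move: (chk_1 0%N isT) (chk_1 1%N isT) (chk_1 2%N isT) (chk_w 0%N isT).
expand_deriv_checks sup (uniq_iter_ordS_le4 s (isT : 4 <= 4)%N) => e0 e1 e2 e3.
apply: (consecutive_quad_sys_310 w_prim (B := c (ordS s)) (C := c (ordS (ordS s)))
         (D := c (ordS (ordS (ordS s)))) (x := (s : nat)%:R) two_neq0 (wX_neq0 s)).
- by rewrite -[RHS]e0; ring.
- by rewrite -[RHS]e1; ring.
- by rewrite -[RHS]e2; ring.
- by rewrite -[RHS]e3; ring.
Qed.

Lemma Ccode_220_consecutive_quad c s : Ccode w 2 2 0 c -> supported_on c (quad s) -> c s = 0.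
Proof.
move=> /Ccode_deriv_checks [chk_1 chk_w _] sup.
move: (chk_1 0%N isT) (chk_1 1%N isT) (chk_w 0%N isT) (chk_w 1%N isT).
expand_deriv_checks sup (uniq_iter_ordS_le4 s (isT : 4 <= 4)%N) => e0 e1 e2 e3.
apply: (consecutive_quad_sys_220 w_prim (B := c (ordS s)) (C := c (ordS (ordS s)))
         (D := c (ordS (ordS (ordS s)))) (x := (s : nat)%:R) (wX_neq0 s)).
- by rewrite -[RHS]e0; ring.
- by rewrite -[RHS]e1; ring.
- by rewrite -[RHS]e2; ring.
- by rewrite -[RHS]e3; ring.
Qed.

Lemma Ccode_211_consecutive_quad c s : Ccode w 2 1 1 c -> supported_on c (quad s) -> c s = 0.
Proof.
move=> /Ccode_deriv_checks [chk_1 chk_w chk_w2] sup.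
move: (chk_1 0%N isT) (chk_1 1%N isT) (chk_w 0%N isT) (chk_w2 0%N isT).
expand_deriv_checks sup (uniq_iter_ordS_le4 s (isT : 4 <= 4)%N) => e0 e1 e2 e3.
apply: (consecutive_quad_sys_211 w_prim (B := c (ordS s)) (C := c (ordS (ordS s)))
         (D := c (ordS (ordS (ordS s)))) (x := (s : nat)%:R) (wX_neq0 s)
         (wX_neq0 (2 * s))).
- by rewrite -[RHS]e0; ring.
- by rewrite -[RHS]e1; ring.
- by rewrite -[RHS]e2; ring.
- by rewrite -[RHS]e3 exprM; ring.
Qed.

Lemma Ccode_020_pair_wt c : Ccode w 0 2 0 c -> c != 0 -> (4 <= pair_wt c)%N.
Proof.
move=> cC c0; apply: pair_wt_ge4 c0 _ _; first by have := n_ge9; lia.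
  by move=> s; apply: Ccode_010_single; apply: (Ccode_sub _ _ _ cC).
by move=> s; apply: Ccode_020_adjacent_pair.
Qed.

Lemma Ccode_210_pair_wt c : Ccode w 2 1 0 c -> c != 0 -> (5 <= pair_wt c)%N.
Proof.
move=> cC c0; apply: pair_wt_ge5 c0 _ _ _; first by have := n_ge9; lia.
- by move=> s; apply: Ccode_010_single; apply: (Ccode_sub _ _ _ cC).
- by move=> s u; apply: Ccode_210_pair.
- by move=> s; apply: Ccode_210_consecutive_triple.
Qed.

Lemma Ccode_310_pair_wt c : Ccode w 3 1 0 c -> c != 0 -> (6 <= pair_wt c)%N.
Proof.
move=> cC c0; apply: pair_wt_ge6 c0 _ _ _ _; first by have := n_ge9; lia.
- by move=> s; apply: Ccode_010_single; apply: (Ccode_sub _ _ _ cC).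
- by move=> s u; apply: Ccode_210_pair; apply: (Ccode_sub _ _ _ cC).
- by move=> s u; apply: Ccode_300_adjacent_triple; apply: (Ccode_sub _ _ _ cC).
- by move=> s; apply: Ccode_310_consecutive_quad.
Qed.

Lemma Ccode_220_pair_wt c : Ccode w 2 2 0 c -> c != 0 -> (6 <= pair_wt c)%N.
Proof.
move=> cC c0; apply: pair_wt_ge6 c0 _ _ _ _; first by have := n_ge9; lia.
- by move=> s; apply: Ccode_010_single; apply: (Ccode_sub _ _ _ cC).
- by move=> s u; apply: Ccode_210_pair; apply: (Ccode_sub _ _ _ cC).
- by move=> s u; apply: Ccode_220_adjacent_triple.
- by move=> s; apply: Ccode_220_consecutive_quad.
Qed.

Lemma Ccode_211_pair_wt c : Ccode w 2 1 1 c -> c != 0 -> (6 <= pair_wt c)%N.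
Proof.
move=> cC c0; apply: pair_wt_ge6 c0 _ _ _ _; first by have := n_ge9; lia.
- by move=> s; apply: Ccode_010_single; apply: (Ccode_sub _ _ _ cC).
- by move=> s u; apply: Ccode_210_pair; apply: (Ccode_sub _ _ _ cC).
- by move=> s u; apply: Ccode_111_adjacent_triple; apply: (Ccode_sub _ _ _ cC).
- by move=> s; apply: Ccode_211_consecutive_quad.
Qed.

Lemma XsubC_exprp (a : 'F_p) : ('X - a%:P) ^+ p = 'X^p - a%:P.
Proof.
have charP : p \in [char {poly 'F_p}] by rewrite pchar_poly pchar_Fp.
rewrite -(pFrobenius_autE charP) (pFrobenius_autB_comm charP (mulrC _ _)) !pFrobenius_autE.
by rewrite -rmorphXn /= -{2}(expf_card a) card_Fp.
Qed.

Lemma Ccode_poly_word r1 r2 r3 q (L : seq nat) : gen3 w r1 r2 r3 %| q ->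
  (forall k, (q`_k != 0) = (k \in L)) -> all (fun k => k < n)%N L ->
  Ccode w r1 r2 r3 (poly_word n q).
Proof.
move=> /divpK gq qL L_n; rewrite -gq mulrC; apply: cyclic_code_poly_word.
  by have := n_ge9; lia.
by rewrite mulrC gq; exact: size_poly_supp qL L_n.
Qed.

Lemma Ccode_0r0_min_pair_dist r2 : (2 <= r2 <= p.-1)%N -> min_pair_dist (Ccode w 0 r2 0) 4.
Proof.
move=> /andP [r2_ge2 r2_lt]; have := p_gt2 => lt2p.
pose q := sparse_poly [:: (- w, 0%N); (1, p)].
have qL k : (q`_k != 0) = (k \in [:: 0; p]%N).
  rewrite coef_sparse_poly_neq0 //= ?oppr_eq0 ?(prim3_neq0 w_prim) ?oner_neq0 ?andbT //.
  by rewrite inE; lia.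
have gen_q : gen3 w 0 p 0 = q.
  by rewrite /gen3 !expr0 mul1r mulr1 XsubC_exprp /q /sparse_poly !big_cons big_nil /=
    -!mul_polyC; ring.
apply: (min_pair_dist_cyclic (c := poly_word n q)).
- apply: (Ccode_poly_word (L := [:: 0; p]%N)) => //; first by rewrite -gen_q gen3_dvdp //; lia.
  by rewrite /=; lia.
- by apply: (poly_word_neq0 (k := 0)); rewrite ?qL //; lia.
- apply: (pair_wt_poly_word (L' := [:: 0; p; n.-1; p.-1]%N) qL).
  + by rewrite /= !inE; lia.
  + by rewrite /=; lia.
  + by move=> i lt_in; rewrite !inE; case: (i.+1 =P n) => ?; lia.
- by move=> c cC; apply: Ccode_020_pair_wt; apply: (Ccode_sub _ _ _ cC).
Qed.

Lemma Ccode_210_min_pair_dist : min_pair_dist (Ccode w 2 1 0) 5.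
Proof.
have := n_ge9 => ge9n.
pose q := sparse_poly [:: (- w, 0%N); (1 + 2%:R * w, 1%N); (- (2%:R + w), 2%N); (1, 3%N)].
have qL k : (q`_k != 0) = (k \in [:: 0; 1; 2; 3]%N).
  by rewrite coef_sparse_poly_neq0 //= ?oppr_eq0 ?(prim3_neq0 w_prim) ?one_add_2prim3_neq0
    ?two_add_prim3_neq0 ?oner_neq0.
have gen_q : gen3 w 2 1 0 = q.
  by rewrite /q /sparse_poly !big_cons big_nil /= -!mul_polyC /gen3; ring.
apply: (min_pair_dist_cyclic (c := poly_word n q)).
- apply: (Ccode_poly_word (L := [:: 0; 1; 2; 3]%N)) => //; first by rewrite gen_q.
  by rewrite /=; lia.
- by apply: (poly_word_neq0 (k := 0)); rewrite ?qL //; lia.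
- apply: (pair_wt_poly_word (L' := [:: 0; 1; 2; 3; n.-1]%N) qL).
  + by rewrite /= !inE; lia.
  + by rewrite /=; lia.
  + by move=> i lt_in; rewrite !inE; case: (i.+1 =P n) => ?; lia.
- exact: Ccode_210_pair_wt.
Qed.

Lemma Ccode_r1r20_min_pair_dist r1 r2 : (r1 <= p.-1)%N -> (r2 <= r1)%N -> (1 <= r2)%N ->
  (4 <= r1 + r2)%N -> min_pair_dist (Ccode w r1 r2 0) 6.
Proof.
move=> r1_lt le_r21 r2_gt0 r12_ge4; have := p_gt2 => lt2p.
pose q := sparse_poly [:: (w, 0%N); (- (1 + w), p); (1, (p + p)%N)].
have qL k : (q`_k != 0) = (k \in [:: 0; p; p + p]%N).
  rewrite coef_sparse_poly_neq0 //= ?oppr_eq0 ?(prim3_neq0 w_prim)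
    ?(one_add_prim3_neq0 w_prim) ?oner_neq0 ?andbT //.
  by rewrite !inE; lia.
have gen_q : gen3 w p p 0 = q.
  rewrite /gen3 expr0 mulr1 -polyC1 !XsubC_exprp /q /sparse_poly !big_cons big_nil /=.
  by rewrite -!mul_polyC exprD; ring.
apply: (min_pair_dist_cyclic (c := poly_word n q)).
- apply: (Ccode_poly_word (L := [:: 0; p; p + p]%N)) => //.
    by rewrite -gen_q gen3_dvdp //; lia.
  by rewrite /=; lia.
- by apply: (poly_word_neq0 (k := 0)); rewrite ?qL //; lia.
- apply: (pair_wt_poly_word (L' := [:: 0; p; p + p; n.-1; p.-1; (p + p).-1]%N) qL).
  + by rewrite /= !inE; lia.
  + by rewrite /=; lia.
  + by move=> i lt_in; rewrite !inE; case: (i.+1 =P n) => ?; lia.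
- move=> c cC; have [r1_ge3 | r1_le2] := leqP 3 r1.
    by apply: Ccode_310_pair_wt; apply: (Ccode_sub _ _ _ cC).
  by apply: Ccode_220_pair_wt; apply: (Ccode_sub _ _ _ cC); lia.
Qed.

Lemma Ccode_2r2r3_min_pair_dist r2 r3 : (r3 <= r2 <= 2)%N -> (2 <= r2 + r3)%N ->
  min_pair_dist (Ccode w 2 r2 r3) 6.
Proof.
move=> /andP [le_r32 r2_le2] r23_ge2; have := n_ge9 => ge9n.
pose q := sparse_poly [:: (1 : 'F_p, 0%N); (- 2%:R, 3%N); (1, 6%N)].
have qL k : (q`_k != 0) = (k \in [:: 0; 3; 6]%N).
  by rewrite coef_sparse_poly_neq0 //= ?oppr_eq0 ?two_neq0 ?oner_neq0.
have gen_q : gen3 w 2 2 2 = q.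
  rewrite /gen3 -!exprMn (prod_XsubC_prim3 w_prim).
  by rewrite /q /sparse_poly !big_cons big_nil /= -!mul_polyC; ring.
apply: (min_pair_dist_cyclic (c := poly_word n q)).
- apply: (Ccode_poly_word (L := [:: 0; 3; 6]%N)) => //.
    by rewrite -gen_q gen3_dvdp //; lia.
  by rewrite /=; lia.
- by apply: (poly_word_neq0 (k := 0)); rewrite ?qL //; lia.
- apply: (pair_wt_poly_word (L' := [:: 0; 3; 6; n.-1; 2; 5]%N) qL).
  + by rewrite /= !inE; lia.
  + by rewrite /=; lia.
  + by move=> i lt_in; rewrite !inE; case: (i.+1 =P n) => ?; lia.
- move=> c cC; have [r2_eq2 | r2_lt2] := eqVneq r2 2%N.
    by apply: Ccode_220_pair_wt; apply: (Ccode_sub _ _ _ cC); rewrite ?r2_eq2.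
  by apply: Ccode_211_pair_wt; apply: (Ccode_sub _ _ _ cC); lia.
Qed.

End SymbolPairCodes.

Theorem proposition3p15 (p : nat) (w : 'F_p) :
  prime p -> odd p -> 3.-primitive_root w ->
  (forall r2 : nat, (2 <= r2 <= p.-1)%N -> min_pair_dist (Ccode w 0 r2 0) 4) /\
  (* below: exponents with p - 1 >= r1 >= r2 >= r3 >= 0 *)
  ((2 <= p.-1)%N -> min_pair_dist (Ccode w 2 1 0) 5) /\
  (forall r1 r2 : nat, (r1 <= p.-1)%N -> (r2 <= r1)%N -> (1 <= r2)%N ->
     (4 <= r1 + r2)%N -> min_pair_dist (Ccode w r1 r2 0) 6) /\
  (forall r2 r3 : nat, (2 <= p.-1)%N -> (r3 <= r2 <= 2)%N ->
     (2 <= r2 + r3 <= 4)%N -> min_pair_dist (Ccode w 2 r2 r3) 6).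
Proof.
move=> p_prime p_odd w_prim; split; [|split; [|split]].
- exact: Ccode_0r0_min_pair_dist.
- by move=> _; apply: Ccode_210_min_pair_dist.
- exact: Ccode_r1r20_min_pair_dist.
- by move=> r2 r3 _ r23 /andP [r23_ge2 _]; apply: Ccode_2r2r3_min_pair_dist.
Qed.
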